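(* Let $G$ be a connected graph with vertex set $\{u_1,\dots,u_m\}$ and $\kappa(G)=\delta(G)>0$, and let $n\ge 3$. Let $S\subseteq V(G\times K_n)$ satisfy: (1) $|S|=(n-1)\delta(G)$; (2) $S_i':=S_i\setminus S\neq\varnothing$ for every $i=1,\dots,m$; (3) $G\times K_n-S$ has no isolated vertex. Then the graph $G^*$ associated with $G$ and $S$ is connected.
   Context: The Kronecker product $G_1\times G_2$ has vertex set $V(G_1)\times V(G_2)$, with $(u_1,v_1)(u_2,v_2)$ an edge iff $u_1u_2\in E(G_1)$ and $v_1v_2\in E(G_2)$. Write $V(K_n)=\{v_1,\dots,v_n\}$ and $S_i=\{u_i\}\times V(K_n)$ for $i=1,\dots,m$. Given $S$ as in the statement, $G^*$ is the graph with vertex set $\{S_1',\dots,S_m'\}$ in which $S_i'S_j'$ is an edge iff $G\times K_n-S$ contains an edge with one end in $S_i'$ and the other in $S_j'$. *)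

From mathcomp Require Import all_boot.
Set Implicit Arguments. Unset Strict Implicit. Unset Printing Implicit Defensive.

Definition sgraph (T : finType) (e : rel T) : Prop := symmetric e /\ irreflexive e.

Definition rel_on (T : finType) (e : rel T) (A : {set T}) : rel T :=
  [rel x y | [&& x \in A, y \in A & e x y]].

Definition connected_on (T : finType) (e : rel T) (A : {set T}) : Prop :=
  forall x y, x \in A -> y \in A -> connect (rel_on e A) x y.

Definition gconnected (T : finType) (e : rel T) : Prop := connected_on e setT.

Definition degree (T : finType) (e : rel T) (x : T) : nat := #|[set y | e x y]|.

Definition mindeg (T : finType) (e : rel T) : nat :=
  \big[minn/#|T|]_(x : T) degree e x.

(* X is a vertex cut (in the broad sense): G - X is disconnected or has <= 1 vertex *)
Definition sepset (T : finType) (e : rel T) (X : {set T}) : bool :=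
  ~~ [forall x in ~: X, forall y in ~: X, connect (rel_on e (~: X)) x y]
  || (#|~: X| <= 1).

Definition kappa (T : finType) (e : rel T) : nat :=
  \big[minn/#|T|]_(X : {set T} | sepset e X) #|X|.

Definition kronK (T : finType) (e : rel T) (n : nat) : rel (T * 'I_n) :=
  [rel x y | e x.1 y.1 && (x.2 != y.2)].

(* the graph G^* on the index set V(G): u ~ w iff G x K_n - S has an edge
   between S_u' = ({u} x V(K_n)) \ S and S_w' *)
Definition Gstar (T : finType) (e : rel T) (n : nat) (S : {set T * 'I_n}) : rel T :=
  [rel u w | [exists x : T * 'I_n, exists y : T * 'I_n,
     [&& x \notin S, y \notin S, x.1 == u, y.1 == w & @kronK T e n x y]]].

From mathcomp Require Import all_boot all_order zify.
Set Implicit Arguments. Unset Strict Implicit. Unset Printing Implicit Defensive.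
Import Order.TTheory.

(* Suppose G^* is disconnected and let A be a set of vertices of
   G closed under G^*-adjacency with x in A and y outside A.  Because G is
   connected some G-edge uw crosses from A to its complement; since u and w
   are not G^*-adjacent, every surviving vertex (u,a) and (w,b) has a = b, so
   the row S_u = {v | (u,v) in S} has exactly n-1 elements.  Hence every
   vertex of the boundary dA of A (vertices of A with a neighbour outside A)
   and of the boundary dA' of the complement contributes n-1 elements to S,
   and |S| = (n-1) delta(G) forces |dA| + |dA'| <= delta(G).  Both boundaries
   are non-empty.  If A is not contained in dA, then dA separates A \ dA from
   the complement, so kappa(G) <= |dA| < delta(G); symmetrically for dA'.
   Otherwise V(G) = dA u dA' has at most delta(G) < |V(G)| vertices.
   The argument only needs n >= 2. *)

Lemma bigminn_le (I : finType) (P : pred I) (F : I -> nat) x0 i :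
  P i -> \big[minn/x0]_(j | P j) F j <= F i.
Proof. by move=> Pi; have := bigmin_le_cond x0 F Pi; rewrite minEnat. Qed.

Lemma card_rows_le (T : finType) n (S : {set T * 'I_n}) (Z : {set T}) k :
  (forall u, u \in Z -> #|[set v | (u, v) \in S]| = k) -> #|Z| * k <= #|S|.
Proof.
move=> rowZ.
have -> : #|Z| * k = \sum_(u in Z) \sum_(v in [set v | (u, v) \in S]) 1.
  by rewrite -sum_nat_const; apply: eq_bigr => u Zu; rewrite sum1_card rowZ.
rewrite pair_big_dep /= sum1_card; apply: subset_leq_card.
by apply/subsetP => -[u v]; rewrite unfold_in /= => /andP[_]; rewrite inE.
Qed.

Section GraphFacts.

Variables (T : finType) (e : rel T).
Hypothesis e_sym : symmetric e.

(* In a loopless graph every vertex misses itself, so delta(G) < |V(G)|. *)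
Lemma mindeg_lt_card (x : T) : irreflexive e -> mindeg e < #|T|.
Proof.
move=> e_irr; apply: leq_ltn_trans (@bigminn_le T xpredT (degree e) #|T| x isT) _.
have nbr_sub : [set y | e x y] \subset ~: [set x].
  by apply/subsetP => y; rewrite !inE; apply: contraTneq => ->; rewrite e_irr.
apply: leq_ltn_trans (subset_leq_card nbr_sub) _.
by rewrite cardsC1 ltn_predL; apply/card_gt0P; exists x.
Qed.

Definition boundary (A : {set T}) : {set T} :=
  [set u in A | [exists w, (w \notin A) && e u w]].

Lemma boundary_sub (A : {set T}) : boundary A \subset A.
Proof. by apply/subsetP => u; rewrite inE => /andP[]. Qed.

Lemma mem_boundary (A : {set T}) u w :
  u \in A -> w \notin A -> e u w -> u \in boundary A.
Proof. by move=> Au Aw euw; rewrite inE Au; apply/existsP; exists w; rewrite Aw. Qed.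

Lemma mem_boundaryC (A : {set T}) u w :
  u \in A -> w \notin A -> e u w -> w \in boundary (~: A).
Proof.
move=> Au Aw euw; apply: (mem_boundary (u := w) (w := u)).
- by rewrite inE.
- by rewrite inE negbK.
- by rewrite e_sym.
Qed.

Lemma crossing_edge (A : {set T}) x y :
  gconnected e -> x \in A -> y \notin A ->
  exists u w, [/\ u \in A, w \notin A & e u w].
Proof.
move=> e_conn Ax Ay.
have [/existsP[u /existsP[w /and3P[Au Aw euw]]]|no_cross] :=
  boolP [exists u, exists w, [&& u \in A, w \notin A & e u w]].
  by exists u, w.
have A_closed : closed (rel_on e setT) A.
  move=> p q; rewrite /rel_on /= !in_setT /= => epq.
  apply/idP/idP => [Ap|Aq]; apply: contraNT no_cross => nA; apply/existsP.
  - by exists p; apply/existsP; exists q; rewrite Ap nA epq.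
  - by exists q; apply/existsP; exists p; rewrite Aq nA e_sym epq.
have := closed_connect A_closed (e_conn x y (in_setT x) (in_setT y)).
by rewrite Ax (negbTE Ay).
Qed.

(* A boundary missing a vertex [a] of [A] separates [a] from any [b] outside
   [A], hence is a vertex cut and bounds kappa(G). *)
Lemma kappa_le_boundary (A : {set T}) a b :
  a \in A -> b \notin A -> a \notin boundary A -> kappa e <= #|boundary A|.
Proof.
move=> Aa Ab Da; apply: bigminn_le; rewrite /sepset; apply/orP; left.
have Ca : a \in ~: boundary A by rewrite inE.
have Cb : b \in ~: boundary A by rewrite !inE (negbTE Ab).
apply/negP => /forallP/(_ a)/implyP/(_ Ca)/forallP/(_ b)/implyP/(_ Cb) conn_ab.
have A_closed : closed (rel_on e (~: boundary A)) A.
  move=> p q; rewrite /rel_on /= !inE => /and3P[Dp Dq epq].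
  apply/idP/idP => [Ap|Aq]; apply/negPn/negP => nA.
  - by move: Dp; rewrite Ap /=; case/negP; apply/existsP; exists q; rewrite nA.
  - by move: Dq; rewrite Aq /=; case/negP; apply/existsP; exists p; rewrite nA e_sym.
by move: (closed_connect A_closed conn_ab); rewrite Aa (negbTE Ab).
Qed.

Variables (n : nat) (S : {set T * 'I_n}).

Lemma Gstar_sym : symmetric (Gstar e S).
Proof.
move=> u w; apply/existsP/existsP => -[p /existsP[q /and5P[Sp Sq pu qw epq]]];
  exists q; apply/existsP; exists p; rewrite Sp Sq pu qw /kronK /= e_sym eq_sym;
  exact: epq.
Qed.

Lemma Gstar_nonadj_labels u w a b :
  e u w -> ~~ Gstar e S u w -> (u, a) \notin S -> (w, b) \notin S -> a = b.
Proof.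
move=> euw nGuw Sua Swb; apply/eqP; apply: contraNT nGuw => neq_ab.
apply/existsP; exists (u, a); apply/existsP; exists (w, b).
by rewrite Sua Swb !eqxx /kronK /= euw neq_ab.
Qed.

Lemma card_row_forced u w :
  (exists a, (u, a) \notin S) -> (exists b, (w, b) \notin S) ->
  (forall a b, (u, a) \notin S -> (w, b) \notin S -> a = b) ->
  #|[set v | (u, v) \in S]| = n - 1.
Proof.
move=> [a0 Sua0] [b0 Swb0] same.
have free_row : ~: [set v | (u, v) \in S] = [set b0].
  apply/setP => v; rewrite !inE; apply/idP/eqP => [Suv|->]; first exact: same.
  by rewrite -(same _ _ Sua0 Swb0).
by have := cardsC [set v | (u, v) \in S]; rewrite free_row cards1 card_ord; lia.
Qed.

Definition Gstar_closed (A : {set T}) : Prop :=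
  forall u w, u \in A -> w \notin A -> ~~ Gstar e S u w.

Lemma Gstar_closedC (A : {set T}) : Gstar_closed A -> Gstar_closed (~: A).
Proof.
move=> clA u w Au Aw; rewrite Gstar_sym; apply: clA.
- by rewrite inE negbK in Aw.
- by rewrite inE in Au.
Qed.

Hypothesis row_free : forall u : T, exists v : 'I_n, (u, v) \notin S.

Lemma boundary_row_full (A : {set T}) u :
  Gstar_closed A -> u \in boundary A -> #|[set v | (u, v) \in S]| = n - 1.
Proof.
move=> clA; rewrite inE => /andP[Au /existsP[w /andP[Aw euw]]].
apply: (card_row_forced (row_free u) (row_free w)).
by move=> a b; apply: Gstar_nonadj_labels euw (clA u w Au Aw).
Qed.

Lemma boundaries_card_le (A : {set T}) :
  2 <= n -> #|S| = (n - 1) * mindeg e -> Gstar_closed A ->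
  #|boundary A| + #|boundary (~: A)| <= mindeg e.
Proof.
move=> n2 cardS clA.
have full u : u \in boundary A :|: boundary (~: A) ->
    #|[set v | (u, v) \in S]| = n - 1.
  case/setUP; [exact: boundary_row_full | exact/boundary_row_full/Gstar_closedC].
have disj : [disjoint boundary A & boundary (~: A)].
  apply: disjointWl (boundary_sub A) _; apply: disjointWr (boundary_sub _) _.
  by rewrite -setI_eq0 setICr.
have := card_rows_le full; rewrite cardsU (disjoint_setI0 disj) cards0 subn0.
by rewrite cardS mulnC leq_pmul2l //; lia.
Qed.

Lemma separating_not_Gstar_closed (A : {set T}) x y :
  irreflexive e -> gconnected e -> kappa e = mindeg e -> 2 <= n ->
  #|S| = (n - 1) * mindeg e -> x \in A -> y \notin A ->
  ~ Gstar_closed A.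
Proof.
move=> e_irr e_conn kd n2 cardS Ax Ay clA.
have bd_le := boundaries_card_le n2 cardS clA.
have [u [w [Au Aw euw]]] := crossing_edge e_conn Ax Ay.
have /card_gt0P bdA_ne : exists v, v \in boundary A.
  by exists u; exact: mem_boundary euw.
have /card_gt0P bdC_ne : exists v, v \in boundary (~: A).
  by exists w; exact: mem_boundaryC euw.
have [sub_A | /subsetPn[a Aa bda]] := boolP (A \subset boundary A); last first.
  by have := kappa_le_boundary Aa Ay bda; lia.
have [sub_C | /subsetPn[b Cb bdb]] := boolP (~: A \subset boundary (~: A)); last first.
  have Cx : x \notin ~: A by rewrite inE negbK.
  by have := kappa_le_boundary Cb Cx bdb; lia.
have := mindeg_lt_card x e_irr; have := cardsC A.
by have := subset_leq_card sub_A; have := subset_leq_card sub_C; lia.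
Qed.

End GraphFacts.

Theorem lemma2p3 (T : finType) (e : rel T) (n : nat) (S : {set T * 'I_n}) :
  sgraph e -> gconnected e -> kappa e = mindeg e -> 0 < mindeg e ->
  3 <= n ->
  #|S| = (n - 1) * mindeg e ->
  (forall u : T, exists v : 'I_n, (u, v) \notin S) ->
  (forall x : T * 'I_n, x \notin S ->
     exists y : T * 'I_n, (y \notin S) && @kronK T e n x y) ->
  gconnected (Gstar e S).
Proof.
move=> [e_sym e_irr] e_conn kd _ n3 cardS row_free _ x y _ _.
apply/negPn/negP => not_conn.
set comp := [set z | connect (rel_on (Gstar e S) setT) x z].
have comp_closed : Gstar_closed e S comp.
  move=> u w; rewrite !inE => xu; apply: contra => Guw.
  by apply: connect_trans xu (connect1 _); rewrite /rel_on /= !in_setT.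
have x_comp : x \in comp by rewrite inE connect0.
have y_comp : y \notin comp by rewrite inE.
by apply: (separating_not_Gstar_closed e_sym row_free e_irr e_conn kd
  (ltnW n3) cardS x_comp y_comp).
Qed.
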